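(* For any $F\subset\bigcup_kS_k$ there is $d\in\{1,\dots,N\}$ such that $S^{N-1}_{\mathbb R}\cap\bar S^{N-1}_{\mathbb R,F}=S^{N-1,d-1}_{\mathbb R}$. Moreover $d\in\{1,2,N\}$.
   Context: $C(S^{N-1}_{\mathbb R,+})$ denotes the universal $C^*$-algebra generated by self-adjoint $x_1,\dots,x_N$ with $\sum_ix_i^2=1$; subspaces are quotients by relations among the $x_i$, intersections impose both sets of relations. $S^{N-1}_{\mathbb R}$ is defined by $x_ix_j=x_jx_i$ for all $i,j$ (the usual real sphere), and for $d\in\{1,\dots,N\}$, $S^{N-1,d-1}_{\mathbb R}=\{x\in S^{N-1}_{\mathbb R}: x_{i_0}\cdots x_{i_d}=0$ for all pairwise distinct $i_0,\dots,i_d\}$ (so $S^{N-1,N-1}_{\mathbb R}=S^{N-1}_{\mathbb R}$). For $\sigma\in S_k$ and indices $i_1,\dots,i_k$ let $\varepsilon_\sigma(i)=(-1)^m$ with $m$ the number of pairs $r<s$ with $\sigma(r)>\sigma(s)$ and $i_{\sigma(r)}\ne i_{\sigma(s)}$. For $F\subset\bigcup_kS_k$, $\bar S^{N-1}_{\mathbb R,F}$ is the subsphere of $S^{N-1}_{\mathbb R,+}$ defined by the relations $x_{i_1}\cdots x_{i_k}=\varepsilon_\sigma(i)x_{i_{\sigma(1)}}\cdots x_{i_{\sigma(k)}}$ for all $\sigma\in F$ (with $\sigma\in S_k$) and all $i_1,\dots,i_k$. *)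

From mathcomp Require Import all_boot all_fingroup.
From Stdlib Require Import Reals.
Set Implicit Arguments. Unset Strict Implicit. Unset Printing Implicit Defensive.

Definition point (N : nat) := 'I_N -> R.

Definition on_sphere (N : nat) (x : point N) : Prop :=
  \big[Rplus/R0]_(i < N) Rmult (x i) (x i) = R1.

Definition mono (N k : nat) (x : point N) (i : 'I_k -> 'I_N) : R :=
  \big[Rmult/R1]_(r < k) x (i r).

Definition inv_count (N k : nat) (s : 'S_k) (i : 'I_k -> 'I_N) : nat :=
  #|[set p : 'I_k * 'I_k |
      [&& (p.1 < p.2)%N, (s p.2 < s p.1)%N & i (s p.1) != i (s p.2)]]|.

Definition eps (N k : nat) (s : 'S_k) (i : 'I_k -> 'I_N) : R :=
  pow (Ropp R1) (inv_count s i).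

Definition perm_family := forall k : nat, 'S_k -> Prop.

(* x satisfies the relations defining \bar S^{N-1}_{R,F} (evaluated at a
   point of the commutative sphere) *)
Definition sat_F (N : nat) (F : perm_family) (x : point N) : Prop :=
  forall (k : nat) (s : 'S_k), F k s ->
    forall i : 'I_k -> 'I_N,
      mono x i = Rmult (eps s i) (mono x (fun r => i (s r))).

Definition in_inter (N : nat) (F : perm_family) (x : point N) : Prop :=
  on_sphere x /\ sat_F F x.

Definition in_Sd (N d : nat) (x : point N) : Prop :=
  on_sphere x /\
  forall i : 'I_d.+1 -> 'I_N, injective i -> mono x i = R0.

From HB Require Import structures.
From mathcomp Require Import all_boot all_fingroup.
From Stdlib Require Import Reals Lra Classical.
Set Implicit Arguments. Unset Strict Implicit. Unset Printing Implicit Defensive.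

(** On the commutative sphere a monomial does not depend on the order of its
   factors, so a relation of F with sign ε_σ(i) = 1 holds trivially, while one
   with ε_σ(i) = -1 (an odd relation) forces x_{i_1}⋯x_{i_k} = 0.  Relabelling
   the indices injectively preserves the sign, so an odd relation whose indices
   take at most d + 1 values kills every product of d + 1 distinct coordinates;
   conversely such vanishing kills every odd relation using more than d values.
   The parity of the inversions between two labels a, b equals the parity of
   a sum of sign exponents of colourings with at most three colours, so if F
   has an odd relation at all it has one with at most three distinct indices.
   Hence d is 1, 2, or (when F has no odd relation) N. *)

HB.instance Definition _ :=
  Monoid.isComLaw.Build R R1 Rmult
    (fun a b c => esym (Rmult_assoc a b c)) Rmult_comm Rmult_1_l.

Section Monomials.
Variables (N k : nat) (x : point N).

Lemma mono_perm (s : 'S_k) (i : 'I_k -> 'I_N) : mono x (fun r => i (s r)) = mono x i.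
Proof. by rewrite /mono [RHS](reindex_inj (@perm_inj _ s)). Qed.

Lemma mono_eq0 (i : 'I_k -> 'I_N) : mono x i = R0 <-> exists r, x (i r) = R0.
Proof.
split; last by case=> r xr0; rewrite /mono (bigD1 r) //= xr0 Rmult_0_l.
move=> mono0; apply: NNPP => no_zero; move: mono0; rewrite /mono.
apply: (big_ind (fun v => v <> R0)) => [|u v|r _]; first exact: R1_neq_R0.
- exact: Rmult_integral_contrapositive_currified.
- by move=> xr0; apply: no_zero; exists r.
Qed.

End Monomials.

Lemma eps_odd N k (s : 'S_k) (i : 'I_k -> 'I_N) :
  eps s i = if odd (inv_count s i) then Ropp R1 else R1.
Proof.
rewrite /eps; elim: (inv_count s i) => [|n IHn] //=.
by rewrite IHn; case: (odd n) => /=; lra.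
Qed.

Lemma sat_F_odd N (F : perm_family) (x : point N) :
  sat_F F x <-> forall k (s : 'S_k), F k s -> forall i : 'I_k -> 'I_N,
    odd (inv_count s i) -> mono x i = R0.
Proof.
split=> [satF k s Fs i odd_i | odd0 k s Fs i].
  by have := satF k s Fs i; rewrite mono_perm eps_odd odd_i; lra.
rewrite mono_perm eps_odd; case: ifP => [odd_i|_]; last lra.
by rewrite (odd0 k s Fs i odd_i); lra.
Qed.

Section InversionCount.
Variables (N k : nat) (s : 'S_k).

Definition inversion (p : 'I_k * 'I_k) := (p.1 < p.2)%N && (s p.2 < s p.1)%N.

Lemma inv_countE (i : 'I_k -> 'I_N) :
  inv_count s i = \sum_(p | inversion p) (i (s p.1) != i (s p.2) : nat).
Proof.
rewrite /inv_count -sum1_card big_mkcond [RHS]big_mkcond /=.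
by apply: eq_bigr => p _; rewrite inE /inversion; do 2 case: (_ < _)%N.
Qed.

Lemma inv_count_relabel (g : 'I_N -> 'I_N) (i : 'I_k -> 'I_N) :
  (forall r r', g (i r) = g (i r') -> i r = i r') ->
  inv_count s (g \o i) = inv_count s i.
Proof.
move=> g_inj; apply: eq_card => p; rewrite !inE /=.
by congr [&& _, _ & ~~ _]; apply/eqP/eqP => [/g_inj|->].
Qed.

Lemma inv_count_const (i : 'I_k -> 'I_N) :
  (forall r r', i r = i r') -> inv_count s i = 0.
Proof.
move=> i_const; apply/eqP; rewrite cards_eq0; apply/eqP/setP => p.
by rewrite !inE (i_const (s p.1) (s p.2)) eqxx !andbF.
Qed.

End InversionCount.

Section PairCounting.
Variable N : nat.
Implicit Types a b c t x y : 'I_N.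

Definition collapse2 a b t := if t == a then a else b.
Definition collapse3 a b c t := if t == a then a else if t == b then b else c.

Lemma neq_pair_sum x y :
  (x != y : nat) =
  \sum_(q : 'I_N * 'I_N | (q.1 < q.2)%N) (((x, y) == q) || ((y, x) == q) : nat).
Proof.
case: eqP => [<-|/eqP neq_xy].
  rewrite big1 // => -[a b] /= lt_ab; rewrite orbb xpair_eqE.
  by case: (x =P a) => [xa|//]; case: (x =P b) => [xb|//]; rewrite -xa -xb ltnn in lt_ab.
wlog lt_xy : x y neq_xy / (x < y)%N => [sym|].
  case: (ltngtP x y) => [|lt_yx|/val_inj eq_xy]; first exact: sym.
    by rewrite (sym y x) 1?eq_sym //; apply: eq_bigr => q _; rewrite orbC.
  by rewrite eq_xy eqxx in neq_xy.
rewrite (bigD1 (x, y)) //= eqxx big1 // => -[a b] /andP[/= lt_ab neq_q].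
rewrite eq_sym (negbTE neq_q) /= xpair_eqE.
by case: eqP => [ya|//]; case: eqP => [xb|//]; rewrite -ya -xb ltnNge ltnW in lt_ab.
Qed.

Lemma pair_indicator_even a b c x y : a != b ->
  (forall t, t != a -> t != b -> (c != a) && (c != b)) ->
  2 %| (((x, y) == (a, b)) || ((y, x) == (a, b)) : nat)
          + (collapse3 a b c x != collapse3 a b c y)
          + (collapse2 a b x != collapse2 a b y)
          + (collapse2 b a x != collapse2 b a y).
Proof.
move=> neq_ab c_out; rewrite dvdn2 /collapse3 /collapse2 !xpair_eqE.
have neq_ba : b != a by rewrite eq_sym.
have [?|xa] := eqVneq x a; last have [?|xb] := eqVneq x b.
all: have [?|ya] := eqVneq y a; last have [?|yb] := eqVneq y b.
all: subst; rewrite ?eqxx ?(negbTE neq_ab) ?(negbTE neq_ba) ?(negbTE xa) ?(negbTE xb)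
  ?(negbTE ya) ?(negbTE yb) //=.
all: first [have /andP[ca cb] := c_out _ ya yb | have /andP[ca cb] := c_out _ xa xb].
all: by rewrite ?eqxx ?(eq_sym a c) ?(eq_sym b c) ?ca ?cb.
Qed.

Lemma collapse2_mem a b t : collapse2 a b t \in [:: a; b].
Proof. by rewrite /collapse2; case: ifP => _; rewrite !inE eqxx ?orbT. Qed.

Lemma collapse3_mem a b c t : collapse3 a b c t \in [:: a; b; c].
Proof. by rewrite /collapse3; case: ifP => _; [|case: ifP => _]; rewrite !inE eqxx ?orbT. Qed.

End PairCounting.

Lemma even_inv_count_of_three_labels N k (s : 'S_k) (i : 'I_k -> 'I_N) :
  (forall (g : 'I_N -> 'I_N) (lbl : seq 'I_N), (size lbl <= 3)%N ->
     (forall t, g t \in lbl) -> ~~ odd (inv_count s (g \o i))) ->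
  ~~ odd (inv_count s i).
Proof.
(* Split the count according to the pair {a, b} of labels of each inversion;
   each part is even by [pair_indicator_even] and the hypothesis. *)
move=> even3; rewrite inv_countE -dvdn2.
under eq_bigr do rewrite neq_pair_sum.
rewrite exchange_big; apply: dvdn_sum => -[a b] /= lt_ab.
have neq_ab : a != b by rewrite neq_ltn lt_ab.
have [c c_out] : exists c, forall t, t != a -> t != b -> (c != a) && (c != b).
  case: (pickP (fun t => (t != a) && (t != b))) => [c c_ab | no_other].
    by exists c => t _ _.
  by exists a => t ta tb; have := no_other t; rewrite ta tb.
have even_collapse g (lbl : seq 'I_N) : (size lbl <= 3)%N -> (forall t, g t \in lbl) ->
    2 %| \sum_(p | inversion s p) (g (i (s p.1)) != g (i (s p.2)) : nat).
  by move=> size_lbl g_lbl; have := even3 g lbl size_lbl g_lbl; rewrite inv_countE dvdn2.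
have := dvdn_sum (index_enum _) (fun p (_ : inversion s p) =>
  pair_indicator_even (i (s p.1)) (i (s p.2)) neq_ab c_out).
rewrite !big_split /= !dvdn_addl //.
- exact: (even_collapse _ [:: a; b; c]) (collapse3_mem a b c).
- exact: (even_collapse _ [:: a; b]) (collapse2_mem a b).
- exact: (even_collapse _ [:: b; a]) (collapse2_mem b a).
Qed.

Section OddRelations.
Variables (N : nat) (F : perm_family).
Arguments F : clear implicits.

Definition odd_relation (n : nat) : Prop :=
  exists k (s : 'S_k) (i : 'I_k -> 'I_N) (lbl : seq 'I_N),
    [/\ F k s, odd (inv_count s i), (size lbl <= n)%N & forall r, i r \in lbl].

Lemma odd_relation_le m n : (m <= n)%N -> odd_relation m -> odd_relation n.
Proof.
move=> le_mn [k [s [i [lbl [Fs odd_i size_lbl i_lbl]]]]].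
by exists k, s, i, lbl; split=> //; apply: leq_trans le_mn.
Qed.

Lemma odd_relation_card n : odd_relation n -> odd_relation N.
Proof.
move=> [k [s [i [lbl [Fs odd_i _ _]]]]].
by exists k, s, i, (enum 'I_N); split; rewrite ?size_enum_ord // => r; rewrite mem_enum.
Qed.

Lemma no_odd_relation1 : ~ odd_relation 1.
Proof.
move=> [k [s [i [lbl [_ + size_lbl i_lbl]]]]]; rewrite inv_count_const // => r r'.
case: lbl size_lbl i_lbl => [|t [|//]] _ i_lbl; first by have := i_lbl r.
by have := i_lbl r; have := i_lbl r'; rewrite !inE => /eqP-> /eqP->.
Qed.

Lemma odd_relation3 n : odd_relation n -> odd_relation 3.
Proof.
move=> [k [s [i [lbl [Fs odd_i _ _]]]]]; apply: NNPP => no_rel3.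
move: odd_i; apply/negP/even_inv_count_of_three_labels => g lbl' size_lbl' g_lbl'.
apply/negP => odd_g; apply: no_rel3.
by exists k, s, (g \o i), lbl'; split=> // r; apply: g_lbl'.
Qed.

Lemma odd_relation_zero_coord d (x : point N) : sat_F F x -> odd_relation d.+1 ->
  forall j : 'I_d.+1 -> 'I_N, injective j -> exists r, x (j r) = R0.
Proof.
move=> satF [k [s [i [lbl [Fs odd_i size_lbl i_lbl]]]]] j inj_j.
pose b := undup lbl.
have i_b r : i r \in b by rewrite mem_undup.
have index_lt r : (index (i r) b < d.+1)%N.
  by rewrite (leq_trans _ (leq_trans (size_undup lbl) size_lbl)) // index_mem.
pose g t := j (inord (index t b)).
have g_inj r r' : g (i r) = g (i r') -> i r = i r'.
  move=> /inj_j /(congr1 (@nat_of_ord _)); rewrite !inordK ?index_lt //.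
  by move=> eq_idx; rewrite -(nth_index (i r) (i_b r)) eq_idx nth_index.
have := proj1 (sat_F_odd F x) satF k s Fs (g \o i).
rewrite inv_count_relabel // => /(_ odd_i) /mono_eq0 [r x0].
by exists (inord (index (i r) b)).
Qed.

Lemma sat_F_of_zero_coord d (x : point N) : ~ odd_relation d ->
  (forall j : 'I_d.+1 -> 'I_N, injective j -> exists r, x (j r) = R0) -> sat_F F x.
Proof.
move=> no_rel zero_j; apply/sat_F_odd => k s Fs i odd_i.
pose b := undup (codom i).
have lt_d_b : (d < size b)%N.
  rewrite ltnNge; apply/negP => size_b; apply: no_rel.
  by exists k, s, i, b; split=> // r; rewrite mem_undup codom_f.
have [t0 _] : exists t0, t0 \in b.
  by case: b lt_d_b => [|t0 b'] // _; exists t0; rewrite inE eqxx.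
pose j (r : 'I_d.+1) := nth t0 b r.
have lt_r_b (r : 'I_d.+1) : (r < size b)%N by apply: leq_trans (ltn_ord r) lt_d_b.
have inj_j : injective j.
  by move=> r r' /eqP; rewrite nth_uniq ?undup_uniq ?lt_r_b // => /eqP /val_inj.
have [r x0] := zero_j j inj_j.
have /codomP [r' eq_r'] : j r \in codom i by rewrite -mem_undup mem_nth.
by apply/mono_eq0; exists r'; rewrite -eq_r'.
Qed.

Lemma in_Sd_E d (x : point N) : in_Sd d x <->
  on_sphere x /\ forall j : 'I_d.+1 -> 'I_N, injective j -> exists r, x (j r) = R0.
Proof. by split=> -[sph zero]; split=> // j /zero /mono_eq0. Qed.

Lemma in_inter_iff_in_Sd d : ~ odd_relation d -> odd_relation d.+1 \/ (N <= d)%N ->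
  forall x : point N, in_inter F x <-> in_Sd d x.
Proof.
move=> no_rel rel_or_large x; rewrite in_Sd_E.
split=> -[sph zero]; split=> //; last exact: sat_F_of_zero_coord no_rel zero.
move=> j inj_j; case: rel_or_large => [rel | le_Nd]; first exact: odd_relation_zero_coord.
by have := leq_card j inj_j; rewrite !card_ord ltnNge le_Nd.
Qed.

End OddRelations.

Theorem proposition2p6 (N : nat) (HN : (1 <= N)%N) (F : perm_family) :
  exists d : nat,
    [/\ (1 <= d <= N)%N,
        (forall x : point N, in_inter F x <-> in_Sd d x)
      & (d = 1 \/ d = 2 \/ d = N)].
Proof.
have [rel2|no_rel2] := classic (odd_relation N F 2).
  exists 1; split; [by rewrite leqnn HN | | by left].
  exact: in_inter_iff_in_Sd (@no_odd_relation1 N F) (or_introl rel2).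
have [rel3|no_rel3] := classic (odd_relation N F 3).
  have le2N : (2 <= N)%N.
    rewrite leqNgt; apply/negP => ltN2; apply: no_rel2.
    exact: odd_relation_le (ltnW ltN2) (odd_relation_card rel3).
  exists 2; split; [by rewrite le2N | | by right; left].
  exact: in_inter_iff_in_Sd no_rel2 (or_introl rel3).
exists N; split; [by rewrite leqnn HN | | by right; right].
by apply: in_inter_iff_in_Sd (or_intror (leqnn N)) => /odd_relation3.
Qed.
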